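(* For every $A\in P(n)$, $$I(2,A)=I(sp,\bar A\circ A)^{1/2}.$$
   Context: $P(n)$ denotes positive semidefinite complex $n\times n$ matrices, $\circ$ the Hadamard (entrywise) product, $\bar A$ the entrywise complex conjugate. $I(2,A)=\min\{\|A\circ B\|_2: B\in P(n),\ \|B\|_2=1\}$ with $\|\cdot\|_2$ the Frobenius norm, and $I(sp,C)=\min\{\|C\circ B\|: B\in P(n),\ \|B\|=1\}$ with $\|\cdot\|$ the spectral norm. *)

From HB Require Import structures.
From mathcomp Require Import all_boot all_order all_algebra.
From mathcomp Require Import complex.
From mathcomp Require Import boolp classical_sets reals.

Set Implicit Arguments.
Unset Strict Implicit.
Unset Printing Implicit Defensive.

Import Order.TTheory GRing.Theory Num.Theory.
Local Open Scope ring_scope.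
Local Open Scope classical_set_scope.

Section Defs.
Variable R : realType.
Local Notation C := (R[i]).

Definition cabs (z : C) : R := ComplexField.Normc.normc z.

Definition mxconj m n (A : 'M[C]_(m, n)) : 'M[C]_(m, n) :=
  map_mx (fun z => (z^*)%C) A.

Definition hadamard n (A B : 'M[C]_n) : 'M[C]_n :=
  \matrix_(i, j) (A i j * B i j).

Definition adj m n (A : 'M[C]_(m, n)) : 'M[C]_(n, m) := (mxconj A)^T.

(* positive semidefinite: Hermitian and x^* A x >= 0 for all x in C^n
   (the order on C: 0 <= z iff z is real and nonnegative) *)
Definition psd n (A : 'M[C]_n) : Prop :=
  (forall i j, A j i = ((A i j)^*)%C) /\
  (forall x : 'cV[C]_n, 0 <= (adj x *m A *m x) 0 0).

Definition frob m n (A : 'M[C]_(m, n)) : R :=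
  Num.sqrt (\sum_(i < m) \sum_(j < n) cabs (A i j) ^+ 2).

Definition vnorm n (x : 'cV[C]_n) : R := frob x.

Definition specnorm n (B : 'M[C]_n) : R :=
  sup [set vnorm (B *m x) | x in [set x : 'cV[C]_n | vnorm x = 1]].

Definition I2 n (A : 'M[C]_n) : R :=
  inf [set frob (hadamard A B) | B in [set B : 'M[C]_n | psd B /\ frob B = 1]].

Definition Isp n (Cm : 'M[C]_n) : R :=
  inf [set specnorm (hadamard Cm B) | B in [set B : 'M[C]_n | psd B /\ specnorm B = 1]].

End Defs.

From HB Require Import structures.
From mathcomp Require Import all_boot all_order all_algebra.
From mathcomp Require Import complex.
From mathcomp Require Import boolp classical_sets reals.
From mathcomp Require Import topology normedtype derive.
From mathcomp Require Import ring lra.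
Import Order.TTheory GRing.Theory Num.Theory.
Import numFieldNormedType.Exports.

Set Implicit Arguments.
Unset Strict Implicit.
Unset Printing Implicit Defensive.

(* Let c_ij = |a_ij|^2 be the entries of conj(A) o A and let m be the minimum of
   the quadratic form u |-> sum c_ij u_i u_j over the probability simplex,
   attained at u.  Both I(2,A)^2 and I(sp, conj(A) o A) equal m.

   Lower bounds: write a PSD B as sum_k d_k v_k v_k^*.  Then ||A o B||_2^2 is
   sum_{k,l} d_k d_l Q(v_k o conj v_l) and, for a top eigenvector x = v_t of B,
   x^* (conj(A) o A o B) x = sum_k d_k Q(conj v_t o v_k), where
   Q(w) = sum c_ij w_i conj(w_j) >= 0 by the Schur product theorem.  Keeping
   only the terms k = l (resp. k = t), whose arguments |v_k|^2 lie in the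
   simplex, gives ||A o B||_2^2 >= m sum_k d_k^2 = m ||B||_2^2 and
   ||conj(A) o A o B|| >= d_t m >= m ||B||.

   Upper bounds: B = sqrt(u) sqrt(u)^T is PSD with ||B||_2 = ||B|| = 1 and
   ||A o B||_2^2 = m; the optimality condition (c u)_i = m wherever u_i > 0,
   together with Cauchy-Schwarz, gives ||conj(A) o A o B|| <= m. *)

Local Open Scope ring_scope.
Local Open Scope complex_scope.

(* Inside ring notations [z^*] would otherwise parse as [Num.conj z]; the
   definitions use [conjc]. *)
Local Notation "z ^*" := (conjc z) : ring_scope.

Section HermitianForms.
Variable R : realType.
Local Notation C := R[i].

Lemma cabs_sqr (z : C) : (cabs z ^+ 2)%:C = z * z^*.
Proof. by rewrite /cabs rmorphXn /= -sqr_normc. Qed.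

(* Unlike [rmorphM], keeps [conjc] syntactically as the head symbol. *)
Lemma conjcM (a b : C) : (a * b)^* = a^* * b^*.
Proof. exact: rmorphM. Qed.

Lemma mulcJM (a b : C) : a * b * (a * b)^* = a * a^* * (b * b^*).
Proof. by rewrite rmorphM /=; ring. Qed.

Lemma ge0_RRe (z : C) : 0 <= z -> (complex.Re z)%:C = z.
Proof. by move=> z0; apply: RRe_real; exact: ger0_real. Qed.

Lemma cauchy_schwarz n (a b : 'I_n -> C) :
  (\sum_i a i * (b i)^*) * (\sum_i a i * (b i)^*)^* <=
  (\sum_i a i * (a i)^*) * (\sum_i b i * (b i)^*).
Proof.
set L := _ * _; set M := _ * _.
have prodE (f g : 'I_n -> C) : (\sum_i f i) * (\sum_j g j) = \sum_i \sum_j f i * g j.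
  by rewrite mulr_suml; apply: eq_bigr => i _; rewrite mulr_sumr.
have LE : L = \sum_i \sum_j a i * (b i)^* * ((a j)^* * b j).
  rewrite /L rmorph_sum prodE; apply: eq_bigr => i _; apply: eq_bigr => j _.
  by rewrite rmorphM /= conjcK.
have ME : M = \sum_i \sum_j a i * (a i)^* * (b j * (b j)^*) by rewrite /M prodE.
have lagrange : (M + M) - (L + L) =
    \sum_i \sum_j (a i * b j - a j * b i) * (a i * b j - a j * b i)^*.
  rewrite {1}ME {1}LE ME LE [X in _ + X - _]exchange_big.
  rewrite [X in _ - (_ + X)]exchange_big -!big_split -sumrB /=.
  apply: eq_bigr => i _; rewrite -!big_split -sumrB /=; apply: eq_bigr => j _.
  rewrite rmorphB !rmorphM /=; ring.
have : 0 <= (M + M) - (L + L).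
  by rewrite lagrange; do 2!apply: sumr_ge0 => ? _; exact: mulcJ_ge0.
by rewrite subr_ge0 -!mulr2n ler_pMn2r.
Qed.

Definition hform n (c : 'M[C]_n) (a : 'I_n -> C) : C :=
  \sum_i \sum_j c i j * a i * (a j)^*.

Lemma hform_rank1 n (w a : 'I_n -> C) :
  hform (\matrix_(i, j) (w i * (w j)^*)) a = (\sum_i w i * a i) * (\sum_i w i * a i)^*.
Proof.
rewrite /hform rmorph_sum mulr_suml; apply: eq_bigr => i _.
rewrite mulr_sumr; apply: eq_bigr => j _; rewrite mxE rmorphM; ring.
Qed.

Lemma hform_const1 n (a : 'I_n -> C) :
  hform (const_mx 1) a = (\sum_i a i) * (\sum_i a i)^*.
Proof.
rewrite /hform rmorph_sum mulr_suml; apply: eq_bigr => i _.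
by rewrite mulr_sumr; apply: eq_bigr => j _; rewrite mxE mul1r.
Qed.

Lemma quad_formE n (X : 'M[C]_n) (x : 'cV[C]_n) :
  (adj x *m X *m x) 0 0 = \sum_i \sum_j (x i 0)^* * X i j * x j 0.
Proof.
rewrite mxE exchange_big /=; apply: eq_bigr => j _.
by rewrite mxE mulr_suml; apply: eq_bigr => i _; rewrite !mxE.
Qed.

Lemma quad_form_mulmx n (X : 'M[C]_n) (x : 'cV[C]_n) :
  (adj x *m X *m x) 0 0 = \sum_i (X *m x) i 0 * (x i 0)^*.
Proof. by rewrite -mulmxA mxE; apply: eq_bigr => i _; rewrite !mxE mulrC. Qed.

Lemma spectral_quad_col n (X V : 'M[C]_n) (d : 'I_n -> R) k :
  (forall i j, X i j = \sum_l (d l)%:C * V l i * (V l j)^*) ->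
  (forall k l, \sum_i V k i * (V l i)^* = (k == l)%:R) ->
  (adj (\col_i V k i) *m X *m \col_i V k i) 0 0 = (d k)%:C.
Proof.
move=> XV Vrows; rewrite quad_formE.
transitivity (\sum_l (d l)%:C * ((\sum_i V l i * (V k i)^*) * (\sum_i V l i * (V k i)^*)^*)).
  transitivity (\sum_i \sum_l \sum_j (V k i)^* * ((d l)%:C * V l i * (V l j)^*) * V k j).
    apply: eq_bigr => i _; rewrite exchange_big; apply: eq_bigr => j _.
    by rewrite !mxE XV mulr_sumr mulr_suml.
  rewrite exchange_big; apply: eq_bigr => l _.
  rewrite rmorph_sum mulr_suml mulr_sumr; apply: eq_bigr => i _.
  rewrite !mulr_sumr; apply: eq_bigr => j _; rewrite rmorphM /= conjcK; ring.
rewrite (bigD1 k) //= Vrows eqxx big1 ?addr0 ?rmorph1 ?mulr1 // => l /negPf lk.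
by rewrite Vrows lk mul0r mulr0.
Qed.

Lemma psd_spectral_decomp n (X : 'M[C]_n) : psd X ->
  exists (d : 'I_n -> R) (V : 'M[C]_n),
  [/\ forall k, 0 <= d k,
      forall i j, X i j = \sum_k (d k)%:C * V k i * (V k j)^*,
      forall k l, \sum_i V k i * (V l i)^* = (k == l)%:R &
      forall i j, \sum_k (V k i)^* * V k j = (i == j)%:R].
Proof.
move=> [Xherm Xpos].
have Xherm' : X \is hermsymmx.
  apply/is_hermitianmxP; rewrite expr0 scale1r.
  by apply/matrixP => i j; rewrite !mxE Xherm.
set P := spectralmx X; set sp := spectral_diag X.
have PU : P \is unitarymx by exact: spectral_unitarymx.
have XE : X = invmx P *m diag_mx sp *m P.
  by apply/orthomx_spectralP; exact: hermitian_normalmx.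
have PPt : P *m invmx P = 1%:M by rewrite mulmxV // unitarymx_unit.
have PtP : invmx P *m P = 1%:M by rewrite mulVmx // unitarymx_unit.
pose d k := complex.Re (sp 0 k).
have dE k : (d k)%:C = sp 0 k.
  apply: RRe_real; move/mxOverP: (hermitian_spectral_diag_real Xherm'); exact.
pose V := map_mx (fun z => z^*) P.
have XV i j : X i j = \sum_k (d k)%:C * V k i * (V k j)^*.
  rewrite XE invmx_unitary // mxE; apply: eq_bigr => k _.
  by rewrite mul_mx_diag !mxE dE conjcK; ring.
have Vrows k l : \sum_i V k i * (V l i)^* = (k == l)%:R.
  rewrite eq_sym; have := congr1 (fun M : 'M[C]_n => M l k) PPt; rewrite invmx_unitary // !mxE => <-.
  by apply: eq_bigr => i _; rewrite !mxE conjcK; ring.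
have Vcols i j : \sum_k (V k i)^* * V k j = (i == j)%:R.
  rewrite eq_sym; have := congr1 (fun M : 'M[C]_n => M j i) PtP; rewrite invmx_unitary // !mxE => <-.
  by apply: eq_bigr => k _; rewrite !mxE conjcK; ring.
exists d, V; split => // k.
by have := Xpos (\col_i V k i); rewrite (spectral_quad_col k XV Vrows) lecR.
Qed.

Lemma sqnorm_spectral_expand n (X c : 'M[C]_n) (d : 'I_n -> R) (V : 'M[C]_n) :
  (forall i j, X i j = \sum_k (d k)%:C * V k i * (V k j)^*) ->
  \sum_i \sum_j c i j * X i j * (X i j)^* =
  \sum_k \sum_l (d k)%:C * (d l)%:C * hform c (fun i => V k i * (V l i)^*).
Proof.
move=> XV.
transitivity (\sum_i \sum_j \sum_k \sum_l
   (c i j * ((d k)%:C * V k i * (V k j)^*) * ((d l)%:C * V l i * (V l j)^*)^*)).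
  apply: eq_bigr => i _; apply: eq_bigr => j _.
  rewrite XV rmorph_sum mulr_sumr mulr_suml; apply: eq_bigr => k _.
  by rewrite mulr_sumr.
have swap4 (G : 'I_n -> 'I_n -> 'I_n -> 'I_n -> C) :
    \sum_i \sum_j \sum_k \sum_l G i j k l = \sum_k \sum_l \sum_i \sum_j G i j k l.
  transitivity (\sum_i \sum_k \sum_l \sum_j G i j k l).
    apply: eq_bigr => i _; rewrite exchange_big; apply: eq_bigr => k _.
    by rewrite exchange_big.
  by rewrite exchange_big; apply: eq_bigr => k _; rewrite exchange_big.
rewrite swap4; apply: eq_bigr => k _; apply: eq_bigr => l _.
rewrite /hform mulr_sumr; apply: eq_bigr => i _; rewrite mulr_sumr.
apply: eq_bigr => j _; rewrite !rmorphM /= conjcK oppr0 complexr0; ring.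
Qed.

Lemma parseval n (W : 'M[C]_n) (a : 'I_n -> C) :
  (forall k l, \sum_i W k i * (W l i)^* = (k == l)%:R) ->
  \sum_i (\sum_k a k * W k i) * (\sum_k a k * W k i)^* = \sum_k a k * (a k)^*.
Proof.
move=> Wrows.
transitivity (\sum_k \sum_l a k * (a l)^* * \sum_i W k i * (W l i)^*).
  transitivity (\sum_i \sum_k \sum_l a k * (a l)^* * (W k i * (W l i)^*)).
    apply: eq_bigr => i _; rewrite rmorph_sum mulr_suml; apply: eq_bigr => k _.
    by rewrite mulr_sumr; apply: eq_bigr => l _; rewrite rmorphM; ring.
  rewrite exchange_big; apply: eq_bigr => k _; rewrite exchange_big.
  by apply: eq_bigr => l _; rewrite mulr_sumr.
apply: eq_bigr => k _; rewrite (bigD1 k) //= Wrows eqxx mulr1 big1 ?addr0 //.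
by move=> l /negPf lk; rewrite Wrows eq_sym lk mulr0.
Qed.

Lemma hform_hadamard_ge0 n (A : 'M[C]_n) (w : 'I_n -> C) :
  psd A -> 0 <= hform (hadamard (mxconj A) A) w.
Proof.
move=> /psd_spectral_decomp [d [V [d0 AV _ _]]].
have -> : hform (hadamard (mxconj A) A) w =
    \sum_i \sum_j (\matrix_(i, j) (w i * (w j)^*)) i j * A i j * (A i j)^*.
  by apply: eq_bigr => i _; apply: eq_bigr => j _; rewrite !mxE; ring.
rewrite (sqnorm_spectral_expand _ AV); do 2!apply: sumr_ge0 => ? _.
by rewrite hform_rank1 mulr_ge0 ?mulcJ_ge0 // mulr_ge0 // lecR.
Qed.

End HermitianForms.

Lemma sum_diag_le (K : numDomainType) n (T : 'I_n -> 'I_n -> K) :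
  (forall k l, 0 <= T k l) -> \sum_k T k k <= \sum_k \sum_l T k l.
Proof.
move=> T0; apply: ler_sum => k _.
by rewrite (bigD1 k) //= lerDl sumr_ge0.
Qed.

Section Norms.
Variable R : realType.
Local Notation C := R[i].
Local Open Scope classical_set_scope.

Local Notation unit_image M := [set vnorm (M *m x) | x in [set x | vnorm x = 1]].

Definition vsqnorm n (x : 'cV[C]_n) : C := \sum_i x i 0 * (x i 0)^*.

Lemma frob_ge0 m n (M : 'M[C]_(m, n)) : 0 <= frob M.
Proof. exact: sqrtr_ge0. Qed.

Lemma vnorm_ge0 n (x : 'cV[C]_n) : 0 <= vnorm x.
Proof. exact: frob_ge0. Qed.

Lemma frob_sqr m n (M : 'M[C]_(m, n)) :
  (frob M ^+ 2)%:C = \sum_i \sum_j M i j * (M i j)^*.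
Proof.
rewrite /frob sqr_sqrtr; last by do 2!apply: sumr_ge0 => ? _; exact: sqr_ge0.
rewrite rmorph_sum; apply: eq_bigr => i _; rewrite rmorph_sum.
by apply: eq_bigr => j _; exact: cabs_sqr.
Qed.

Lemma vnorm_sqr n (x : 'cV[C]_n) : (vnorm x ^+ 2)%:C = vsqnorm x.
Proof. by rewrite /vnorm frob_sqr; apply: eq_bigr => i _; rewrite big_ord1. Qed.

Lemma vnorm_le n (x : 'cV[C]_n) (b : R) :
  0 <= b -> vsqnorm x <= (b ^+ 2)%:C -> vnorm x <= b.
Proof. by move=> b0; rewrite -vnorm_sqr lecR ler_sqr ?nnegrE ?vnorm_ge0. Qed.

Lemma vnorm_eq1 n (x : 'cV[C]_n) : (vnorm x = 1) <-> (vsqnorm x = 1).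
Proof.
rewrite -vnorm_sqr; split => [->|x1]; first by rewrite expr1n.
apply/eqP; rewrite -(@eqrXn2 _ 2) ?vnorm_ge0 // expr1n.
by apply/eqP/complexI; rewrite x1.
Qed.

Lemma vsqnorm_mulmx_le n (M : 'M[C]_n) (x : 'cV[C]_n) :
  vsqnorm (M *m x) <= (frob M ^+ 2)%:C * vsqnorm x.
Proof.
rewrite frob_sqr mulr_suml; apply: ler_sum => i _.
have := cauchy_schwarz (fun j => M i j) (fun j => (x j 0)^*).
rewrite mxE; under eq_bigr do rewrite conjcK.
by under [X in _ <= _ * X -> _]eq_bigr do rewrite conjcK mulrC.
Qed.

Lemma specnorm_set_ub n (M : 'M[C]_n) :
  ubound (unit_image M) (frob M).
Proof.
move=> _ [x /= /vnorm_eq1 x1 <-]; apply: vnorm_le; first exact: frob_ge0.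
by apply: le_trans (vsqnorm_mulmx_le _ _) _; rewrite x1 mulr1.
Qed.

Lemma specnorm_ge n (M : 'M[C]_n) (x : 'cV[C]_n) :
  vnorm x = 1 -> vnorm (M *m x) <= specnorm M.
Proof.
move=> x1; apply: ub_le_sup; last by exists x.
by exists (frob M); exact: specnorm_set_ub.
Qed.

Lemma specnorm_le n (M : 'M[C]_n) (b : R) : 0 <= b ->
  (forall x : 'cV[C]_n, vnorm x = 1 -> vnorm (M *m x) <= b) -> specnorm M <= b.
Proof.
move=> b0 Mb; have [[y My]|M0] := pselect (unit_image M !=set0).
  by apply: ge_sup; [exists y | move=> _ [x /= x1 <-]; exact: Mb].
rewrite /specnorm; suff -> : unit_image M = set0 by rewrite sup0.
by apply/seteqP; split => // y My; apply: M0; exists y.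
Qed.

Lemma specnorm_ge0 n (M : 'M[C]_n) : 0 <= specnorm M.
Proof.
have [[y My]|M0] := pselect (unit_image M !=set0).
  apply: le_trans (ub_le_sup _ My); last by exists (frob M); exact: specnorm_set_ub.
  by case: My => x _ <-; exact: vnorm_ge0.
rewrite /specnorm; suff -> : unit_image M = set0 by rewrite sup0.
by apply/seteqP; split => // y My; apply: M0; exists y.
Qed.

Lemma frob_dim0 k (M : 'M[C]_(0, k)) : frob M = 0.
Proof. by rewrite /frob big_ord0 sqrtr0. Qed.

Lemma specnorm_dim0 (M : 'M[C]_0) : specnorm M = 0.
Proof.
rewrite /specnorm; suff -> : unit_image M = set0 by rewrite sup0.
apply/seteqP; split => // y [x /= x1 _]; move: x1.
by rewrite /vnorm frob_dim0 => /eqP; rewrite eq_sym oner_eq0.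
Qed.

Lemma quad_form_le_specnorm n (M : 'M[C]_n) (x : 'cV[C]_n) :
  vnorm x = 1 -> 0 <= (adj x *m M *m x) 0 0 ->
  (adj x *m M *m x) 0 0 <= (specnorm M)%:C.
Proof.
move=> x1; set q := (adj x *m M *m x) 0 0 => q0.
set r := complex.Re q; have qr : q = r%:C by rewrite ge0_RRe.
have r0 : 0 <= r by rewrite -lecR -qr.
rewrite qr lecR -ler_sqr ?nnegrE ?specnorm_ge0 //.
apply: (@le_trans _ _ (vnorm (M *m x) ^+ 2)); last first.
  by rewrite ler_sqr ?nnegrE ?vnorm_ge0 ?specnorm_ge0 ?specnorm_ge.
rewrite -lecR vnorm_sqr -[vsqnorm _]mulr1 -(proj1 (vnorm_eq1 x) x1).
have := cauchy_schwarz (fun i => (M *m x) i 0) (fun i => x i 0).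
by rewrite -quad_form_mulmx -/q qr conjc_real -rmorphM -expr2.
Qed.

End Norms.

Section LowerBounds.
Variable R : realType.
Local Notation C := R[i].

Definition hform_simplex_lb n (c : 'M[C]_n) (m : R) :=
  forall a : 'I_n -> C, (forall i, 0 <= a i) -> \sum_i a i = 1 -> m%:C <= hform c a.

Variables (n : nat) (A : 'M[C]_n) (m : R).
Hypotheses (psdA : psd A) (mlb : hform_simplex_lb (hadamard (mxconj A) A) m).

Lemma frob_hadamard_ge (B : 'M[C]_n) :
  psd B -> m * frob B ^+ 2 <= frob (hadamard A B) ^+ 2.
Proof.
move=> /psd_spectral_decomp [d [V [d0 BV Vrows _]]].
rewrite -lecR rmorphM /= !frob_sqr.
have -> : \sum_i \sum_j hadamard A B i j * (hadamard A B i j)^* =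
    \sum_i \sum_j hadamard (mxconj A) A i j * B i j * (B i j)^*.
  by do 2!apply: eq_bigr => ? _; rewrite !mxE rmorphM /=; ring.
have -> : \sum_i \sum_j B i j * (B i j)^* =
    \sum_i \sum_j const_mx 1 i j * B i j * (B i j)^*.
  by do 2!apply: eq_bigr => ? _; rewrite mxE mul1r.
rewrite !(sqnorm_spectral_expand _ BV).
have -> : \sum_k \sum_l (d k)%:C * (d l)%:C *
    hform (const_mx 1) (fun i => V k i * (V l i)^*) = \sum_k (d k)%:C * (d k)%:C.
  apply: eq_bigr => k _; rewrite (bigD1 k) //= hform_const1 Vrows eqxx mulr1n rmorph1 !mulr1.
  by rewrite big1 ?addr0 // => l /negPf lk; rewrite hform_const1 Vrows eq_sym lk mul0r mulr0.
apply: le_trans (sum_diag_le _); last first.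
  move=> k l; rewrite mulr_ge0 ?hform_hadamard_ge0 //.
  by rewrite mulr_ge0 // lecR.
rewrite mulr_sumr; apply: ler_sum => k _.
rewrite mulrC ler_wpM2l ?mulr_ge0 ?lecR //; apply: mlb => [i|].
  exact: mulcJ_ge0.
by rewrite Vrows eqxx mulr1n.
Qed.

Section TopEigenvector.
Variables (B : 'M[C]_n) (d : 'I_n -> R) (V : 'M[C]_n) (t : 'I_n).
Hypotheses (d0 : forall k, 0 <= d k) (dt : forall k, d k <= d t).
Hypothesis BV : forall i j, B i j = \sum_k (d k)%:C * V k i * (V k j)^*.
Hypothesis Vrows : forall k l, \sum_i V k i * (V l i)^* = (k == l)%:R.
Hypothesis Vcols : forall i j, \sum_k (V k i)^* * V k j = (i == j)%:R.

Lemma specnorm_le_top_eigenvalue : specnorm B <= d t.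
Proof.
apply: specnorm_le => // y /vnorm_eq1 y1; apply: vnorm_le => //.
pose s k := \sum_j y j 0 * (V k j)^*.
have By i : (B *m y) i 0 = \sum_k ((d k)%:C * s k) * V k i.
  rewrite mxE; under eq_bigr do rewrite BV mulr_suml.
  rewrite exchange_big /=; apply: eq_bigr => k _.
  by rewrite /s mulr_sumr mulr_suml; apply: eq_bigr => j _; ring.
have ys : vsqnorm y = \sum_k s k * (s k)^*.
  pose W := \matrix_(j, k) (V k j)^*.
  have Wrows j l : \sum_k W j k * (W l k)^* = (j == l)%:R.
    by rewrite -Vcols; apply: eq_bigr => k _; rewrite !mxE conjcK.
  have sW k : s k = \sum_j y j 0 * W j k by apply: eq_bigr => j _; rewrite mxE.
  rewrite /vsqnorm -(parseval (fun j => y j 0) Wrows).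
  by apply: eq_bigr => k _; rewrite sW.
rewrite /vsqnorm; under eq_bigr do rewrite By.
rewrite parseval // -[_%:C]mulr1 -y1 ys mulr_sumr; apply: ler_sum => k _.
rewrite rmorphM /= oppr0 complexr0 mulrACA -rmorphM ler_wpM2r ?mulcJ_ge0 //.
by rewrite lecR -expr2 ler_sqr ?nnegrE.
Qed.

Lemma quad_hadamard_top_eigenvector_ge :
  (d t * m)%:C <=
  (adj (\col_i V t i) *m hadamard (hadamard (mxconj A) A) B *m \col_i V t i) 0 0.
Proof.
rewrite quad_formE.
have -> : \sum_i \sum_j ((\col_i V t i) i 0)^* *
    hadamard (hadamard (mxconj A) A) B i j * (\col_i V t i) j 0 =
    \sum_k (d k)%:C * hform (hadamard (mxconj A) A) (fun i => (V t i)^* * V k i).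
  transitivity (\sum_i \sum_k \sum_j ((d k)%:C *
      (hadamard (mxconj A) A i j * ((V t i)^* * V k i) * ((V t j)^* * V k j)^*))).
    apply: eq_bigr => i _; rewrite [RHS]exchange_big; apply: eq_bigr => j _.
    rewrite !mxE BV !mulr_sumr mulr_suml; apply: eq_bigr => k _.
    by rewrite rmorphM /= conjcK; ring.
  rewrite exchange_big; apply: eq_bigr => k _; rewrite /hform mulr_sumr.
  by apply: eq_bigr => i _; rewrite mulr_sumr; apply: eq_bigr => j _; ring.
rewrite (bigD1 t) //= rmorphM /= -[X in X <= _]addr0 lerD //; last first.
  by apply: sumr_ge0 => k _; rewrite mulr_ge0 ?lecR ?hform_hadamard_ge0.
rewrite ler_wpM2l ?lecR //; apply: mlb => [i|]; first by rewrite mulrC mulcJ_ge0.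
have := Vrows t t; rewrite eqxx mulr1n => <-.
by apply: eq_bigr => i _; rewrite mulrC.
Qed.

End TopEigenvector.

Lemma specnorm_hadamard_ge (B : 'M[C]_n) : (0 < n)%N -> 0 <= m -> psd B ->
  m * specnorm B <= specnorm (hadamard (hadamard (mxconj A) A) B).
Proof.
move=> n0 m0 /psd_spectral_decomp [d [V [d0 BV Vrows Vcols]]].
have [t _ dt] := @arg_maxP _ _ _ (Ordinal n0) xpredT d isT.
have {}dt k : d k <= d t by exact: dt.
have x1 : vnorm (\col_i V t i) = 1.
  apply/vnorm_eq1; have := Vrows t t; rewrite eqxx mulr1n => <-.
  by apply: eq_bigr => i _; rewrite mxE.
have qlb := quad_hadamard_top_eigenvector_ge t d0 BV Vrows.
have q0 : 0 <= (adj (\col_i V t i) *m hadamard (hadamard (mxconj A) A) B *m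
    \col_i V t i) 0 0 by apply: le_trans qlb; rewrite lecR mulr_ge0.
rewrite -lecR; apply: le_trans (quad_form_le_specnorm x1 q0); apply: le_trans qlb.
rewrite lecR [d t * m]mulrC; apply: ler_wpM2l => //.
exact: (specnorm_le_top_eigenvalue d0 dt BV Vrows Vcols).
Qed.

End LowerBounds.

Section SimplexMinimum.
Variable R : realType.
Local Open Scope classical_set_scope.

Definition qform n (c : 'M[R]_n) (u : 'rV[R]_n) : R :=
  \sum_i \sum_j c i j * u 0 i * u 0 j.

Definition simplex n : set 'rV[R]_n :=
  [set u | (forall i, 0 <= u 0 i) /\ \sum_i u 0 i = 1].

Lemma qform_continuous n (c : 'M[R]_n) : continuous (qform c).
Proof.
apply: continuous_big => [|i _]; first exact: add_continuous.
apply: continuous_big => [|j _]; first exact: add_continuous.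
move=> u; apply: (continuousM (s := fun u : 'rV[R]_n => c i j * u 0 i)
   (t := fun u : 'rV[R]_n => u 0 j)); last exact: coord_continuous.
apply: (continuousM (s := fun _ : 'rV[R]_n => c i j)
   (t := fun u : 'rV[R]_n => u 0 i)); first exact: cst_continuous.
exact: coord_continuous.
Qed.

Lemma simplex_closed n : closed (@simplex n).
Proof.
have -> : @simplex n = (\bigcap_(i in setT) [set u : 'rV[R]_n | 0 <= u 0 i]) `&`
    ((fun u : 'rV[R]_n => \sum_i u 0 i) @^-1` [set 1]).
  apply/seteqP; split => u /=.
    by move=> [u0 u1]; split => // i _; exact: u0.
  by move=> [u0 u1]; split => // i; exact: u0.
apply: closedI.
  apply: closed_bigI => i _.
  apply: (@preimage_closed _ _ (fun u : 'rV[R]_n => u 0 i) [set x | 0 <= x]).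
    by move=> x _; exact: coord_continuous.
  exact: closed_ge.
apply: preimage_closed; last exact: closed_eq.
move=> x _; apply: continuous_big => [|i _]; first exact: add_continuous.
exact: coord_continuous.
Qed.

Lemma simplex_compact n : compact (@simplex n).
Proof.
apply: (@subclosed_compact _ _
    [set v : 'rV[R]_n | forall i, `[(0:R), 1]%classic (v ord0 i)]).
- exact: simplex_closed.
- by apply: (@rV_compact R n (fun=> `[(0:R), 1]%classic)) => i; exact: segment_compact.
- move=> u [u0 u1] i /=; rewrite in_itv /= u0 /= -u1.
  by rewrite (bigD1 i) //= lerDl sumr_ge0.
Qed.

Lemma qform_min_exists n (c : 'M[R]_n) : (0 < n)%N ->
  exists2 u, simplex u & forall v, simplex v -> qform c u <= qform c v.
Proof.
move=> n0; pose k0 : 'I_n := Ordinal n0.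
have simplex_neq0 : @simplex n !=set0.
  exists (\row_i (i == k0)%:R); split => [i|]; first by rewrite mxE ler0n.
  by rewrite (bigD1 k0) //= mxE eqxx big1 ?addr0 // => i /negPf ik; rewrite mxE ik.
have [u uS umin] := EVT_min_rV simplex_neq0 (@simplex_compact n)
  (continuous_subspaceT (@qform_continuous n c)).
by exists u; [rewrite inE in uS | move=> v vS; apply: umin; rewrite inE].
Qed.

Lemma simplex_transfer n (u : 'rV[R]_n) (i j : 'I_n) (t : R) :
  simplex u -> i != j -> 0 <= t <= u 0 i ->
  simplex (u + t *: \row_k ((k == j)%:R - (k == i)%:R)).
Proof.
move=> [u0 u1] ij /andP[t0 tu]; split => [k|].
  rewrite !mxE; have [->|kj] := eqVneq k j.
    by rewrite eq_sym (negPf ij) subr0 mulr1 addr_ge0.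
  rewrite sub0r; have [->|ki] := eqVneq k i; first by rewrite mulrN1 subr_ge0.
  by rewrite oppr0 mulr0 addr0.
have sum_delta (l : 'I_n) : \sum_k (k == l)%:R = 1 :> R.
  by rewrite (bigD1 l) //= eqxx big1 ?addr0 // => k /negPf ->.
under eq_bigr do rewrite !mxE.
by rewrite big_split /= u1 -mulr_sumr sumrB !sum_delta subrr mulr0 addr0.
Qed.

Section Optimality.
Variables (n : nat) (c : 'M[R]_n) (u : 'rV[R]_n).
Hypothesis csym : forall i j, c i j = c j i.
Hypotheses (uS : simplex u) (umin : forall v, simplex v -> qform c u <= qform c v).

Let grad i := \sum_k c i k * u 0 k.

Lemma qformDZ (w : 'rV[R]_n) (t : R) :
  qform c (u + t *: w) =
  qform c u + t * (2 * \sum_i w 0 i * grad i) + t ^+ 2 * qform c w.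
Proof.
rewrite /qform /grad.
transitivity (\sum_i \sum_j (c i j * u 0 i * u 0 j + t * (c i j * w 0 i * u 0 j)
   + t * (c i j * w 0 j * u 0 i) + t ^+ 2 * (c i j * w 0 i * w 0 j))).
  by do 2!apply: eq_bigr => ? _; rewrite !mxE; ring.
have sum4 (a b e f : 'I_n -> R) (x y : R) :
    \sum_k (a k + x * b k + x * e k + y * f k) =
    \sum_k a k + x * \sum_k b k + x * \sum_k e k + y * \sum_k f k.
  by rewrite !big_split /= -!mulr_sumr.
rewrite (eq_bigr (fun i => \sum_j c i j * u 0 i * u 0 j + t * \sum_j c i j * w 0 i * u 0 j
   + t * \sum_j c i j * w 0 j * u 0 i + t ^+ 2 * \sum_j c i j * w 0 i * w 0 j)); last first.
  by move=> i _; rewrite sum4.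
rewrite sum4.
have -> : \sum_i \sum_j c i j * w 0 j * u 0 i = \sum_i \sum_j c i j * w 0 i * u 0 j.
  by rewrite exchange_big /=; do 2!apply: eq_bigr => ? _; rewrite csym.
have -> : \sum_i w 0 i * \sum_j c i j * u 0 j = \sum_i \sum_j c i j * w 0 i * u 0 j.
  by apply: eq_bigr => i _; rewrite mulr_sumr; apply: eq_bigr => j _; ring.
ring.
Qed.

Lemma qform_min_grad_le i j : 0 < u 0 i -> grad i <= grad j.
Proof.
move=> ui; rewrite leNgt; apply/negP => gji.
have ij : i != j by apply: contraTneq gji => ->; rewrite ltxx.
pose w : 'rV[R]_n := \row_k ((k == j)%:R - (k == i)%:R).
pose del := grad i - grad j.
have del0 : 0 < del by rewrite subr_gt0.
have K1 : 0 < `|qform c w| + 1 by rewrite ltr_wpDl.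
(* a step small enough that the quadratic term cannot undo the linear decrease *)
pose t := Num.min (u 0 i) (del / (`|qform c w| + 1)).
have t0 : 0 < t by rewrite lt_min ui divr_gt0.
have := umin (simplex_transfer uS ij (_ : 0 <= t <= u 0 i)).
rewrite ltW //= ge_min lexx => /(_ isT); rewrite qformDZ.
have -> : \sum_k w 0 k * grad k = - del.
  rewrite /del; under eq_bigr do rewrite mxE mulrBl.
  rewrite sumrB opprB; congr (_ - _).
    by rewrite (bigD1 j) //= eqxx mul1r big1 ?addr0 // => k /negPf ->; rewrite mul0r.
  by rewrite (bigD1 i) //= eqxx mul1r big1 ?addr0 // => k /negPf ->; rewrite mul0r.
have tw : t * qform c w < del.
  apply: le_lt_trans (ler_norm _) _; rewrite normrM (gtr0_norm t0).
  apply: (@le_lt_trans _ _ (del / (`|qform c w| + 1) * `|qform c w|)).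
    by apply: ler_wpM2r => //; rewrite ge_min lexx orbT.
  by rewrite mulrAC ltr_pdivrMr // ltr_pM2l // ltrDl.
have : t * (2 * - del) + t ^+ 2 * qform c w < 0.
  by rewrite expr2 -mulrA -mulrDr pmulr_rlt0 //; lra.
lra.
Qed.

Lemma qform_min_grad i : 0 < u 0 i -> qform c u = grad i.
Proof.
case: (uS) => [u0 u1] ui.
have gradE k : u 0 k * grad k = u 0 k * grad i.
  have [->|uk] := eqVneq (u 0 k) 0; first by rewrite !mul0r.
  have ukp : 0 < u 0 k by rewrite lt_neqAle eq_sym uk u0.
  by congr (_ * _); apply/eqP; rewrite eq_le !qform_min_grad_le.
transitivity (\sum_k u 0 k * grad k).
  by apply: eq_bigr => k _; rewrite /grad mulr_sumr; apply: eq_bigr => j _; ring.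
by under eq_bigr do rewrite gradE; rewrite -mulr_suml u1 mul1r.
Qed.

End Optimality.

End SimplexMinimum.

Section SqrtOuter.
Variable R : realType.
Local Notation C := R[i].

Variables (n : nat) (u : 'rV[R]_n).
Hypothesis uS : simplex u.

Local Notation y i := (Num.sqrt (u 0 i))%:C.

Definition sqrt_outer : 'M[C]_n := \matrix_(i, j) (y i * y j).

Let y_real i : (y i)^* = y i.
Proof. exact: conjc_real. Qed.

Let conjc_yM i z : (y i * z)^* = y i * z^*.
Proof. by rewrite conjcM conjc_real. Qed.

Let yy i : y i * y i = (u 0 i)%:C.
Proof. by case: uS => u0 _; rewrite -rmorphM /= -expr2 sqr_sqrtr. Qed.

Let sum_u : \sum_i (u 0 i)%:C = 1 :> C.
Proof. by case: uS => _ u1; rewrite -rmorph_sum u1. Qed.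

Lemma sqrt_outer_sqr i j : sqrt_outer i j * (sqrt_outer i j)^* = (u 0 i * u 0 j)%:C.
Proof. by rewrite mxE conjc_yM y_real rmorphM /= -!yy; ring. Qed.

Let sqrt_outer_mulmx (x : 'cV[C]_n) i :
  (sqrt_outer *m x) i 0 = y i * \sum_j y j * x j 0.
Proof. by rewrite mxE mulr_sumr; apply: eq_bigr => j _; rewrite mxE mulrA. Qed.

Lemma sqrt_outer_psd : psd sqrt_outer.
Proof.
split => [i j|x]; first by rewrite !mxE conjc_yM y_real mulrC.
rewrite quad_formE.
have -> : \sum_i \sum_j (x i 0)^* * sqrt_outer i j * x j 0 =
    (\sum_i y i * x i 0)^* * (\sum_i y i * x i 0).
  rewrite rmorph_sum mulr_suml; apply: eq_bigr => i _.
  rewrite mulr_sumr; apply: eq_bigr => j _.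
  by rewrite mxE rmorphM /= oppr0 complexr0; ring.
by rewrite mulrC mulcJ_ge0.
Qed.

Lemma frob_sqrt_outer : frob sqrt_outer = 1.
Proof.
apply/eqP; rewrite -(@eqrXn2 _ 2) ?frob_ge0 // expr1n; apply/eqP/complexI.
rewrite frob_sqr rmorph1; under eq_bigr do under eq_bigr do rewrite sqrt_outer_sqr.
rewrite -[RHS]sum_u; apply: eq_bigr => i _.
by rewrite -[RHS]mulr1 -sum_u mulr_sumr; apply: eq_bigr => j _; rewrite rmorphM.
Qed.

Lemma specnorm_sqrt_outer : specnorm sqrt_outer = 1.
Proof.
apply/eqP; rewrite eq_le; apply/andP; split.
  apply: specnorm_le => // x /vnorm_eq1 x1; apply: vnorm_le => //.
  rewrite expr1n rmorph1 /vsqnorm; under eq_bigr do rewrite sqrt_outer_mulmx.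
  set s := \sum_j y j * x j 0.
  have -> : \sum_i y i * s * (y i * s)^* = s * s^*.
    transitivity (\sum_i (u 0 i)%:C * (s * s^*)).
      by apply: eq_bigr => i _; rewrite conjc_yM -yy; ring.
    by rewrite -mulr_suml sum_u mul1r.
  have := cauchy_schwarz (fun j => x j 0) (fun j => y j).
  have -> : \sum_i x i 0 * (y i)^* = s by apply: eq_bigr => i _; rewrite y_real mulrC.
  have -> : \sum_i y i * (y i)^* = 1 by under eq_bigr do rewrite y_real yy.
  by rewrite mulr1 -/(vsqnorm x) x1.
pose z : 'cV[C]_n := \col_i y i.
have z1 : vnorm z = 1.
  by apply/vnorm_eq1; rewrite -sum_u; apply: eq_bigr => i _; rewrite mxE y_real yy.
have Bz : sqrt_outer *m z = z.
  apply/matrixP => i j; rewrite (ord1 j) sqrt_outer_mulmx.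
  have -> : \sum_j y j * z j 0 = 1.
    by rewrite -sum_u; apply: eq_bigr => k _; rewrite mxE yy.
  by rewrite mulr1 mxE.
by rewrite -[X in X <= _]z1 -[in X in X <= _]Bz specnorm_ge.
Qed.

End SqrtOuter.

Lemma hform_simplex_lb_qform (R : realType) n (c : 'M[R]_n) (c' : 'M[R[i]]_n) (m : R) :
  (forall i j, c' i j = (c i j)%:C) -> (forall v, simplex v -> m <= qform c v) ->
  hform_simplex_lb c' m.
Proof.
move=> c'E mlb a a0 a1; pose v : 'rV[R]_n := \row_i complex.Re (a i).
have aE i : a i = (v 0 i)%:C by rewrite mxE ge0_RRe.
have -> : hform c' a = (qform c v)%:C.
  rewrite /hform /qform rmorph_sum; apply: eq_bigr => i _.
  rewrite rmorph_sum; apply: eq_bigr => j _.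
  by rewrite c'E !aE conjc_real !rmorphM.
rewrite lecR; apply: mlb; split => [i|]; first by rewrite -lecR -aE.
by apply: complexI; rewrite rmorph_sum rmorph1 -a1; apply: eq_bigr => i _; rewrite aE.
Qed.

Section HadamardSqrtOuter.
Variable R : realType.
Local Notation C := R[i].

Definition absq n (A : 'M[C]_n) : 'M[R]_n := \matrix_(i, j) cabs (A i j) ^+ 2.

Variables (n : nat) (A : 'M[C]_n) (u : 'rV[R]_n).
Hypotheses (psdA : psd A) (uS : simplex u).
Local Notation c := (absq A).
Local Notation m := (qform (absq A) u).
Local Notation y i := (Num.sqrt (u 0 i))%:C.
Local Notation M := (hadamard (hadamard (mxconj A) A) (sqrt_outer u)).

Lemma absqE i j : (c i j)%:C = hadamard (mxconj A) A i j.
Proof. by rewrite !mxE cabs_sqr mulrC. Qed.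

Lemma absq_sym i j : c i j = c j i.
Proof. by apply: complexI; rewrite !absqE !mxE (proj1 psdA) conjcK mulrC. Qed.

Lemma qform_absq_ge0 : 0 <= m.
Proof.
case: uS => u0 _; do 2!apply: sumr_ge0 => ? _.
by rewrite !mulr_ge0 // mxE sqr_ge0.
Qed.

Lemma frob_hadamard_sqrt_outer : frob (hadamard A (sqrt_outer u)) = Num.sqrt m.
Proof.
case: uS => u0 _.
rewrite -[LHS]ger0_norm ?frob_ge0 // -sqrtr_sqr; congr Num.sqrt.
apply: complexI; rewrite frob_sqr /qform rmorph_sum; apply: eq_bigr => i _.
rewrite rmorph_sum; apply: eq_bigr => j _.
by rewrite [hadamard _ _ _ _]mxE mulcJM (sqrt_outer_sqr uS) -cabs_sqr -rmorphM mxE mulrA.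
Qed.

Hypothesis u_grad : forall i, 0 < u 0 i -> \sum_k c i k * u 0 k = m.

Let slack i : u 0 i * \sum_k c i k * u 0 k = m * u 0 i.
Proof.
case: uS => u0 _; have [->|ui] := eqVneq (u 0 i) 0; first by rewrite mul0r mulr0.
by rewrite mulrC u_grad // lt_neqAle eq_sym ui u0.
Qed.

Section Row.
Variable x : 'cV[C]_n.

Let al i j : C := (cabs (A i j))%:C.
Let xs j := if u 0 j == 0 then 0 else x j 0.

Let al_real i j : (al i j)^* = al i j.
Proof. exact: conjc_real. Qed.

Let al_sqr i j : al i j * al i j = (c i j)%:C.
Proof. by rewrite -rmorphM -expr2 mxE. Qed.

Let al_entry i j : (A i j)^* * A i j = al i j * al i j.
Proof. by rewrite al_sqr absqE !mxE. Qed.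

Let y_sqr i : y i * y i = (u 0 i)%:C.
Proof. by case: uS => u0 _; rewrite -rmorphM -expr2 sqr_sqrtr. Qed.

Lemma hadamard_sqrt_outer_row_le i :
  (M *m x) i 0 * ((M *m x) i 0)^* <=
  (m * u 0 i)%:C * \sum_j (c i j)%:C * (xs j * (xs j)^*).
Proof.
have Mx : (M *m x) i 0 = \sum_j (al i j * y i * xs j) * (al i j * y j)^*.
  rewrite mxE; apply: eq_bigr => j _; rewrite !mxE !conjcM al_real conjc_real /xs.
  have [uj|uj] := eqVneq (u 0 j) 0; first by rewrite uj sqrtr0 !mulr0 mul0r.
  by rewrite al_entry; ring.
rewrite Mx; apply: le_trans (cauchy_schwarz _ _) _.
have -> : \sum_j al i j * y j * (al i j * y j)^* = (\sum_k c i k * u 0 k)%:C.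
  rewrite rmorph_sum; apply: eq_bigr => j _.
  by rewrite !conjcM al_real conjc_real rmorphM /= -al_sqr -y_sqr; ring.
have -> : \sum_j al i j * y i * xs j * (al i j * y i * xs j)^* =
    (u 0 i)%:C * \sum_j (c i j)%:C * (xs j * (xs j)^*).
  rewrite mulr_sumr; apply: eq_bigr => j _.
  by rewrite !conjcM al_real conjc_real -al_sqr -y_sqr; ring.
by rewrite -slack rmorphM /= mulrAC.
Qed.

Lemma hadamard_sqrt_outer_vsqnorm_le :
  vsqnorm x = 1 ->
  vsqnorm (M *m x) <= (m ^+ 2)%:C.
Proof.
move=> x1; apply: le_trans (ler_sum _ (fun i _ => hadamard_sqrt_outer_row_le i)) _.
have -> : \sum_i (m * u 0 i)%:C * \sum_j (c i j)%:C * (xs j * (xs j)^*) =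
    m%:C * \sum_j (\sum_k c j k * u 0 k)%:C * (xs j * (xs j)^*).
  transitivity (\sum_i \sum_j m%:C * ((u 0 i * c i j)%:C * (xs j * (xs j)^*))).
    apply: eq_bigr => i _; rewrite mulr_sumr; apply: eq_bigr => j _.
    by rewrite !rmorphM /=; ring.
  rewrite exchange_big mulr_sumr; apply: eq_bigr => j _.
  have -> : (\sum_k c j k * u 0 k)%:C = \sum_k (c j k * u 0 k)%:C by rewrite rmorph_sum.
  rewrite big_distrl big_distrr /=; apply: eq_bigr => i _.
  by rewrite absq_sym !rmorphM /=; ring.
have -> : \sum_j (\sum_k c j k * u 0 k)%:C * (xs j * (xs j)^*) =
    m%:C * \sum_j xs j * (xs j)^*.
  rewrite mulr_sumr; apply: eq_bigr => j _; rewrite /xs.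
  case: eqP => [_|/eqP uj]; first by rewrite !(mul0r, mulr0).
  have uj0 : 0 < u 0 j by case: uS => u0 _; rewrite lt_neqAle eq_sym uj u0.
  by rewrite u_grad.
rewrite mulrA -rmorphM -expr2 -[X in _ <= X]mulr1 ler_wpM2l ?lecR ?sqr_ge0 //.
rewrite -x1; apply: ler_sum => j _; rewrite /xs.
by case: eqP => _ //; rewrite mul0r mulcJ_ge0.
Qed.

End Row.

Lemma specnorm_hadamard_sqrt_outer_le :
  specnorm M <= m.
Proof.
apply: specnorm_le qform_absq_ge0 _ => x /vnorm_eq1 x1.
exact/(vnorm_le qform_absq_ge0)/hadamard_sqrt_outer_vsqnorm_le.
Qed.

End HadamardSqrtOuter.

Lemma inf_attained (R : realType) (S : classical_sets.set R) (x : R) :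
  S x -> (forall y, S y -> x <= y) -> inf S = x.
Proof.
move=> Sx xlb; apply/eqP; rewrite eq_le; apply/andP; split.
  by apply: ge_inf => //; exists x.
by apply: lb_le_inf => //; exists x.
Qed.

Section Dim0.
Variable R : realType.
Local Notation C := R[i].
Local Open Scope classical_set_scope.

Lemma I2_dim0 (A : 'M[C]_0) : I2 A = 0.
Proof.
rewrite /I2; suff -> : [set frob (hadamard A B) | B in
    [set B | psd B /\ frob B = 1]] = set0 by rewrite inf0.
apply/seteqP; split => // y [B [_]].
by rewrite frob_dim0 => /eqP; rewrite eq_sym oner_eq0.
Qed.

Lemma Isp_dim0 (A : 'M[C]_0) : Isp A = 0.
Proof.
rewrite /Isp; suff -> : [set specnorm (hadamard A B) | B in
    [set B | psd B /\ specnorm B = 1]] = set0 by rewrite inf0.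
apply/seteqP; split => // y [B [_]].
by rewrite specnorm_dim0 => /eqP; rewrite eq_sym oner_eq0.
Qed.

End Dim0.

Section MinimumValue.
Variable R : realType.
Local Notation C := R[i].
Variables (n : nat) (A : 'M[C]_n) (u : 'rV[R]_n).
Hypotheses (psdA : psd A) (uS : simplex u).
Hypothesis umin : forall v, simplex v -> qform (absq A) u <= qform (absq A) v.

Let mlb : hform_simplex_lb (hadamard (mxconj A) A) (qform (absq A) u).
Proof. exact: hform_simplex_lb_qform (fun i j => esym (absqE A i j)) umin. Qed.

Lemma I2_eq_sqrt_qform_min : I2 A = Num.sqrt (qform (absq A) u).
Proof.
apply: inf_attained.
  exists (sqrt_outer u); last exact: frob_hadamard_sqrt_outer.
  by split; [exact: sqrt_outer_psd | exact: frob_sqrt_outer].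
move=> _ [B [psdB frobB] <-].
have := frob_hadamard_ge psdA mlb psdB; rewrite frobB expr1n mulr1 => mle.
by apply: le_trans (ler_wsqrtr mle) _; rewrite sqrtr_sqr ger0_norm ?frob_ge0.
Qed.

Lemma Isp_eq_qform_min : (0 < n)%N ->
  Isp (hadamard (mxconj A) A) = qform (absq A) u.
Proof.
move=> n0; have m0 := qform_absq_ge0 A uS.
have mle B : psd B -> specnorm B = 1 ->
    qform (absq A) u <= specnorm (hadamard (hadamard (mxconj A) A) B).
  move=> psdB specB; have := specnorm_hadamard_ge psdA mlb n0 m0 psdB.
  by rewrite specB mulr1.
apply: inf_attained => [|_ [B [psdB specB] <-]]; last exact: mle.
have spec1 := specnorm_sqrt_outer uS.
exists (sqrt_outer u); first by split; [exact: sqrt_outer_psd | exact: spec1].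
apply/eqP; rewrite eq_le mle ?andbT //; last exact: sqrt_outer_psd.
apply: specnorm_hadamard_sqrt_outer_le => // i ui.
by rewrite (qform_min_grad (absq_sym psdA) uS umin ui).
Qed.

End MinimumValue.

Theorem theorem3p3 (R : realType) (n : nat) (A : 'M[R[i]]_n) :
  psd A -> I2 A = Num.sqrt (Isp (hadamard (mxconj A) A)).
Proof.
case: n A => [|n] A psdA; first by rewrite I2_dim0 Isp_dim0 sqrtr0.
have [u uS umin] := qform_min_exists (absq A) (ltn0Sn n).
by rewrite (I2_eq_sqrt_qform_min psdA uS umin) (Isp_eq_qform_min psdA uS umin).
Qed.
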